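(* Suppose $\Phi$ has type $D_m$ with $m\ge3$, and let $\lambda\in\mathfrak h_K^*$ with $\lambda(p^n\mathfrak h_R)\subseteq R$ be a weight which is not regular integral. Then there exist $\beta_1,\dots,\beta_r\in\Delta$ such that $(s_{\beta_{i-1}}\cdots s_{\beta_1}\cdot\lambda)(h_{\beta_i})\notin\mathbb N_0$ for all $1\le i\le r$, and $s_{\beta_r}\cdots s_{\beta_1}\cdot\lambda\in S_{\mathfrak g}$.
   Context: $\mathfrak g$ is an $\mathcal O_F$-lattice ($F/\mathbb Q_p$ finite, $p$ odd) in a split simple $F$-Lie algebra with Chevalley basis, root system $\Phi$, simple roots $\Delta$, Cartan $\mathfrak h$; $K/F$ finite with ring of integers $R$; $n\in\mathbb N_0$ fixed; $\lambda(h_\alpha)=\langle\lambda,\alpha^\vee\rangle$. Labelling: for $m\ge4$, $\Delta=\{\alpha_1,\dots,\alpha_m\}$ with $\alpha_i$ adjacent to $\alpha_{i+1}$ for $i\le m-2$ and $\alpha_{m-2}$ adjacent to $\alpha_m$ (standard $D_m$ diagram, $\alpha_{m-1},\alpha_m$ the two end nodes at the fork); type $D_3$ means type $A_3$ with simple roots labelled so that $\alpha_1$ is the middle node, adjacent to $\alpha_2$ and $\alpha_3$. $W$ is the Weyl group, $\rho$ half the sum of positive roots, $w\cdot\lambda=w(\lambda+\rho)-\rho$, $\Phi_\lambda=\{\alpha\in\Phi:\langle\lambda+\rho,\alpha^\vee\rangle\in\mathbb Z\}$. $\lambda$ is regular integral if $\langle\lambda+\rho,\alpha^\vee\rangle\in\mathbb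 Z\setminus\{0\}$ for all $\alpha\in\Phi$. A subset of $\Delta$ is connected if its full subgraph of the Dynkin diagram is connected. $S_{\mathfrak g}$ is the set of $\lambda\in\mathfrak h_K^*$ with $\lambda(p^n\mathfrak h_R)\subseteq R$ such that: $\lambda$ is not dominant integral (i.e. not all $\lambda(h_\alpha)\in\mathbb N_0$, $\alpha\in\Delta$); $\Delta\setminus\Phi_\lambda$ is either empty or a connected subset of $\Delta$ containing $\alpha_1$; and $\langle\lambda+\rho,\alpha^\vee\rangle\notin\mathbb Z_{<0}$ for all $\alpha\in\Delta$. *)

(* Root system of type D_m realized in the standard
   epsilon-coordinates; weights are row vectors in K^m. *)
From mathcomp Require Import all_boot all_order all_algebra.
Set Implicit Arguments. Unset Strict Implicit. Unset Printing Implicit Defensive.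
Import Order.TTheory GRing.Theory Num.Theory.
Local Open Scope ring_scope.

Section DRoot.
Variables (K : fieldType) (m : nat).

Definition eps (k : nat) : 'rV[K]_m := \row_(j < m) ((j : nat) == k)%:R.

(* standard bilinear form; for roots of D_m (norm 2) we have a^vee = a,
   so <mu, a^vee> = form mu a *)
Definition form (x y : 'rV[K]_m) : K := \sum_(j < m) x 0 j * y 0 j.

Definition is_root (a : 'rV[K]_m) : Prop :=
  exists (i j : 'I_m) (s t : bool),
    i != j /\ a = (-1) ^+ s *: eps i + (-1) ^+ t *: eps j.

(* simple roots, 0-indexed: alpha i = eps_i - eps_(i+1) for i < m-1,
   alpha (m-1) = eps_(m-2) + eps_(m-1).  The paper's alpha_(i+1) is alpha i. *)
Definition alpha (i : 'I_m) : 'rV[K]_m :=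
  if ((i : nat).+1 < m)%N then eps i - eps (i : nat).+1
  else eps (m - 2) + eps (m - 1).

(* rho = half sum of positive roots of D_m = (m-1, m-2, ..., 1, 0) *)
Definition rho : 'rV[K]_m := \row_(j < m) (m - 1 - j)%:R.

(* lambda(h_a) = <lambda, a^vee> *)
Definition ev (lam a : 'rV[K]_m) : K := form lam a.

(* dot action of the reflection s_a : s_a . lam = s_a(lam + rho) - rho *)
Definition sdot (a lam : 'rV[K]_m) : 'rV[K]_m :=
  lam - form (lam + rho) a *: a.

(* s_(b_k) ... s_(b_1) . lam  for bs = [:: b_1; ...; b_k] *)
Definition sdots (bs : seq 'I_m) (lam : 'rV[K]_m) : 'rV[K]_m :=
  foldl (fun mu b => sdot (alpha b) mu) lam bs.

Definition isInt (x : K) : Prop := exists z : int, x = z%:~R.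
Definition isNat (x : K) : Prop := exists k : nat, x = k%:R.

Definition regular_integral (lam : 'rV[K]_m) : Prop :=
  forall a, is_root a -> exists z : int, z != 0 /\ form (lam + rho) a = z%:~R.

(* lambda(p^n h_R) \subseteq R, h_R = R-span of the h_(alpha_i) *)
Definition lattice_cond (R : {pred K}) (p n : nat) (lam : 'rV[K]_m) : Prop :=
  forall r : 'I_m -> K, (forall i, r i \in R) ->
    (p ^ n)%:R * (\sum_(i < m) r i * ev lam (alpha i)) \in R.

Definition dominant_integral (lam : 'rV[K]_m) : Prop :=
  forall i, isNat (ev lam (alpha i)).

Definition adj (i j : 'I_m) : Prop := i != j /\ form (alpha i) (alpha j) != 0.

Inductive reach (S : 'I_m -> Prop) (i : 'I_m) : 'I_m -> Prop :=
| reach_refl : S i -> reach S i i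
| reach_step j k : reach S i j -> S k -> adj j k -> reach S i k.

Definition connected (S : 'I_m -> Prop) : Prop :=
  forall i j, S i -> S j -> reach S i j.

(* Delta \ Phi_lambda, as a predicate on indices of simple roots *)
Definition nonint_simple (lam : 'rV[K]_m) (i : 'I_m) : Prop :=
  ~ isInt (form (lam + rho) (alpha i)).

Definition in_S (R : {pred K}) (p n : nat) (lam : 'rV[K]_m) : Prop :=
  [/\ lattice_cond R p n lam,
      ~ dominant_integral lam,
      (forall i, ~ nonint_simple lam i) \/
        ((forall i : 'I_m, (i : nat) = 0%N -> nonint_simple lam i)
         /\ connected (nonint_simple lam))
    & forall i, ~ exists k : nat, form (lam + rho) (alpha i) = - (k.+1)%:R].

End DRoot.

(* Work with the coordinates c_k = <lam + rho, eps_k>.  The simple reflection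
   in alpha_i (i < m-1) swaps c_i and c_(i+1); the one in the fork root
   eps_(m-2) + eps_(m-1) replaces (c_(m-2), c_(m-1)) by (-c_(m-1), -c_(m-2)).
   A reflection is an allowed step whenever <lam + rho, alpha> is not a positive
   integer, in particular whenever it is not an integer.
   First, by non-integral steps only, make alpha_0, ..., alpha_(k-1) non-integral
   for growing k: bubble a later coordinate that is not congruent to c_k modulo Z
   into position k+1.  If there is none, either c_(m-2) + c_(m-1) is an integer,
   so the non-integral simple roots are exactly alpha_0, ..., alpha_(k-1), or the
   fork reflection produces such a coordinate.  Once alpha_0, ..., alpha_(m-3)
   are non-integral, the non-integral simple roots are connected anyway.
   Second, reflect in simple roots alpha with <lam + rho, alpha> a negative
   integer.  Such steps keep the set of non-integral simple roots, and they
   decrease the number of positive roots on which lam + rho is a negative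
   integer, since s_alpha permutes the positive roots other than alpha.
   Reflections change each lam(h_beta) by an integer multiple of lam(h_alpha) + 1,
   which preserves the lattice condition.  Regular integrality is invariant under
   the dot action and follows from dominance, so the final weight is not
   dominant integral. *)

From HB Require Import structures.
From mathcomp Require Import all_boot all_order all_algebra.
From mathcomp Require Import zify ring boolp.
Set Implicit Arguments. Unset Strict Implicit. Unset Printing Implicit Defensive.
Import GRing.Theory.
Local Open Scope ring_scope.

Section Form.
Variables (K : fieldType) (m : nat).
Implicit Types x y z : 'rV[K]_m.

Lemma formC x y : form x y = form y x.
Proof. by apply: eq_bigr => j _; rewrite mulrC. Qed.

Lemma formDr x y z : form x (y + z) = form x y + form x z.
Proof. by rewrite -big_split; apply: eq_bigr => j _; rewrite mxE mulrDr. Qed.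

Lemma formZr x (c : K) y : form x (c *: y) = c * form x y.
Proof. by rewrite mulr_sumr; apply: eq_bigr => j _; rewrite mxE mulrCA. Qed.

Lemma formNr x y : form x (- y) = - form x y.
Proof. by rewrite -scaleN1r formZr mulN1r. Qed.

Lemma formBr x y z : form x (y - z) = form x y - form x z.
Proof. by rewrite formDr formNr. Qed.

Lemma formDl x y z : form (x + y) z = form x z + form y z.
Proof. by rewrite formC formDr !(formC z). Qed.

Lemma formZl x (c : K) y : form (c *: x) y = c * form x y.
Proof. by rewrite formC formZr formC. Qed.

Lemma formBl x y z : form (x - y) z = form x z - form y z.
Proof. by rewrite formC formBr !(formC z). Qed.

Lemma form_eps x k (hk : (k < m)%N) : form x (eps K m k) = x 0 (Ordinal hk).
Proof.
rewrite /form (bigD1 (Ordinal hk)) //= big1 ?addr0 => [|j /negbTE]; first by rewrite mxE eqxx mulr1.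
by rewrite mxE -val_eqE /= => ->; rewrite mulr0.
Qed.

Lemma form_eps_out x k : (m <= k)%N -> form x (eps K m k) = 0.
Proof.
move=> hk; rewrite /form big1 // => j _.
by rewrite mxE ltn_eqF ?mulr0 // (leq_trans (ltn_ord j) hk).
Qed.

Lemma form_eps_eps i k : form (eps K m i) (eps K m k) = ((i == k) && (k < m)%N)%:R.
Proof.
case: (ltnP k m) => hk; last by rewrite form_eps_out // andbF.
by rewrite form_eps mxE andbT eq_sym.
Qed.

End Form.

Section Integers.
Variable K : fieldType.
Implicit Types x y : K.

Lemma isInt_nat (k : nat) : isInt (k%:R : K).
Proof. by exists k%:Z. Qed.

Lemma isIntD x y : isInt x -> isInt y -> isInt (x + y).
Proof. by move=> [a ->] [b ->]; exists (a + b); rewrite rmorphD. Qed.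

Lemma isIntN x : isInt x -> isInt (- x).
Proof. by move=> [a ->]; exists (- a); rewrite rmorphN. Qed.

Lemma isIntB x y : isInt x -> isInt y -> isInt (x - y).
Proof. by move=> hx /isIntN; apply: isIntD. Qed.

Lemma isIntM x y : isInt x -> isInt y -> isInt (x * y).
Proof. by move=> [a ->] [b ->]; exists (a * b); rewrite rmorphM. Qed.

Lemma isInt_sign (b : bool) : isInt ((-1) ^+ b : K).
Proof. by exists ((-1) ^+ b); rewrite rmorph_sign. Qed.

Lemma nonint_addl x y : isInt x -> ~ isInt y -> ~ isInt (x + y).
Proof. by move=> hx hy hxy; apply: hy; rewrite -(addKr x y); apply: isIntD (isIntN hx) hxy. Qed.

End Integers.

Definition swapn (p k : nat) : nat := if k == p then p.+1 else if k == p.+1 then p else k.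

Definition in_pair (p k : nat) : bool := (k == p) || (k == p.+1).

Lemma swapnK p : involutive (swapn p).
Proof.
move=> k; rewrite /swapn; have [->|nkp] := eqVneq k p; first by rewrite eqxx gtn_eqF.
have [->|nkp1] := eqVneq k p.+1; first by rewrite eqxx.
by rewrite (negbTE nkp) (negbTE nkp1).
Qed.

Lemma swapn_lt p n k : (p.+1 < n)%N -> (k < n)%N -> (swapn p k < n)%N.
Proof. by move=> hp hk; rewrite /swapn; case: eqP => _; last case: eqP => _; lia. Qed.

Lemma swapn_mono p a b : (a < b)%N -> ~ (a = p /\ b = p.+1) -> (swapn p a < swapn p b)%N.
Proof.
rewrite /swapn => hab hn.
by case: (a =P p) => ?; case: (a =P p.+1) => ?; case: (b =P p) => ?; case: (b =P p.+1) => ?; lia.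
Qed.

Lemma in_pair_swapn p k : in_pair p (swapn p k) = in_pair p k.
Proof.
rewrite /in_pair /swapn; have [->|nkp] := eqVneq k p; first by rewrite eqxx orbT.
by have [_|nkp1] := eqVneq k p.+1; rewrite ?eqxx // (negbTE nkp) (negbTE nkp1).
Qed.

Section SignedSwap.
Variable K : fieldType.

Definition signed_swap (p : nat) (e : bool) (x : nat -> K) (k : nat) : K :=
  (-1) ^+ (e && in_pair p k) * x (swapn p k).

Lemma signed_swapK p e (x : nat -> K) k : signed_swap p e (signed_swap p e x) k = x k.
Proof. by rewrite /signed_swap swapnK mulrA in_pair_swapn -signr_addb addbb mul1r. Qed.

End SignedSwap.

Section Coordinates.
Variables (K : fieldType) (m : nat).
Hypothesis hm2 : (2 <= m)%N.
Implicit Types (lam : 'rV[K]_m) (b : 'I_m).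

Definition coord lam (k : nat) : K := form (lam + rho K m) (eps K m k).

Definition lead b : nat := if (b.+1 < m)%N then (b : nat) else (m - 2)%N.
Definition is_fork b : bool := ~~ (b.+1 < m)%N.

Lemma lead_lt b : ((lead b).+1 < m)%N.
Proof. by rewrite /lead; case: ifP => // _; lia. Qed.

Lemma is_fork_lead b : is_fork b -> (lead b).+2 = m.
Proof. by rewrite /is_fork /lead => /negbTE ->; lia. Qed.

Lemma alphaE b : alpha K b = eps K m (lead b) - (-1) ^+ is_fork b *: eps K m (lead b).+1.
Proof.
rewrite /alpha /lead /is_fork; case: ifP => _; first by rewrite scale1r.
by rewrite expr1 scaleN1r opprK (_ : (m - 2).+1 = m - 1)%N //; lia.
Qed.

Lemma form_rho_alpha b : form (rho K m) (alpha K b) = 1.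
Proof.
have rho_eps k (hk : (k < m)%N) : form (rho K m) (eps K m k) = (m - 1 - k)%:R.
  by rewrite form_eps mxE.
rewrite alphaE formBr formZr !rho_eps ?lead_lt ?(ltnW (lead_lt b)) //.
rewrite /lead /is_fork; case: ifP => hb /=.
  rewrite mul1r (_ : m - 1 - b = (m - 1 - b.+1).+1)%N; last by lia.
  by move: (m - 1 - b.+1)%N => t; rewrite -natr1 addrAC subrr add0r.
have -> : (m - 1 - (m - 2) = 1)%N by lia.
have -> : (m - 1 - (m - 2).+1 = 0)%N by lia.
by rewrite mulr0 subr0.
Qed.

Lemma form_shift_alpha lam b : form (lam + rho K m) (alpha K b) = ev lam (alpha K b) + 1.
Proof. by rewrite formDl form_rho_alpha. Qed.

Lemma form_shift_alpha_coord lam b : form (lam + rho K m) (alpha K b) =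
  coord lam (lead b) - (-1) ^+ is_fork b * coord lam (lead b).+1.
Proof. by rewrite alphaE formBr formZr. Qed.

Lemma form_shift_sdot a lam y :
  form (sdot a lam + rho K m) y = form (lam + rho K m) y - form (lam + rho K m) a * form a y.
Proof. by rewrite /sdot addrAC formBl formZl. Qed.

Lemma coord_sdot_pair p (e : bool) lam k : (p.+1 < m)%N ->
  coord (sdot (eps K m p - (-1) ^+ e *: eps K m p.+1) lam) k = signed_swap p e (coord lam) k.
Proof.
move=> hp; rewrite [LHS]/coord form_shift_sdot -/(coord lam k).
rewrite formBr formZr formBl formZl !form_eps_eps.
rewrite /signed_swap /in_pair /swapn -/(coord lam p) -/(coord lam p.+1).
have [->|nkp] := eqVneq k p.
  by rewrite (gtn_eqF (ltnSn p)) /= ltnW // andbT mulr1n; ring.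
have [->|nkp1] := eqVneq k p.+1.
  rewrite hp /= mulr0n mulr1n andbT.
  by case: e; rewrite ?expr1 ?expr0; ring.
by rewrite /= andbF !mulr0n expr0; ring.
Qed.

Lemma coord_sdot_alpha b lam k :
  coord (sdot (alpha K b) lam) k = signed_swap (lead b) (is_fork b) (coord lam) k.
Proof. by rewrite alphaE coord_sdot_pair ?lead_lt. Qed.

Lemma isInt_form_alpha (i j : 'I_m) : isInt (form (alpha K i) (alpha K j)).
Proof.
rewrite !alphaE !(formBl, formBr, formZl, formZr) !form_eps_eps.
by repeat first [apply: isIntB | apply: isIntM | apply: isInt_nat | apply: isInt_sign].
Qed.

End Coordinates.


Section Reachability.
Variables (K : fieldType) (m : nat).
Implicit Types (lam : 'rV[K]_m) (bs : seq 'I_m).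

Fixpoint admissible lam bs : Prop :=
  if bs is b :: bs' then ~ isNat (ev lam (alpha K b)) /\ admissible (sdot (alpha K b) lam) bs'
  else True.

Lemma sdots_cat s t lam : sdots (s ++ t) lam = sdots t (sdots s lam).
Proof. exact: foldl_cat. Qed.

Lemma admissible_cat s t lam :
  admissible lam s -> admissible (sdots s lam) t -> admissible lam (s ++ t).
Proof. by elim: s lam => [|b s IH] lam //= [hb hs] ht; split=> //; apply: IH. Qed.

Lemma admissibleP lam bs : admissible lam bs ->
  forall s1 s2 b, bs = s1 ++ b :: s2 -> ~ isNat (ev (sdots s1 lam) (alpha K b)).
Proof.
elim: bs lam => [|c bs IH] lam //=; first by move=> _ [].
move=> [hc hbs] [|b1 s1] s2 b /= [<- e] //.
exact: IH hbs _ _ _ e.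
Qed.

Definition reachable lam lam' := exists2 bs, admissible lam bs & sdots bs lam = lam'.

Lemma reachable_refl lam : reachable lam lam.
Proof. by exists [::]. Qed.

Lemma reachable_trans lam1 lam2 lam3 :
  reachable lam1 lam2 -> reachable lam2 lam3 -> reachable lam1 lam3.
Proof.
move=> [s hs <-] [t ht <-]; exists (s ++ t); last by rewrite sdots_cat.
exact: admissible_cat.
Qed.

Lemma reachable_sdot lam b : ~ isNat (ev lam (alpha K b)) -> reachable lam (sdot (alpha K b) lam).
Proof. by exists [:: b]. Qed.

End Reachability.

Section DynkinDiagram.
Variables (K : fieldType) (m : nat).
Hypothesis hm : (3 <= m)%N.
Implicit Types (S : 'I_m -> Prop) (i j : 'I_m).
Let hm2 : (2 <= m)%N := ltnW hm.

Lemma reach_mem S i j : reach K S i j -> S i /\ S j.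
Proof. by elim=> [hi|j' k _ [hi _] hk _]. Qed.

Lemma reach_trans S i j k : reach K S i j -> reach K S j k -> reach K S i k.
Proof. by move=> hij; elim=> [//|j' k' _ IH]; apply: reach_step. Qed.

Lemma adj_sym i j : adj K i j -> adj K j i.
Proof. by move=> [nij hf]; split; [rewrite eq_sym | rewrite formC]. Qed.

Lemma reach_sym S i j : reach K S i j -> reach K S j i.
Proof.
elim=> [hi|j' k hij IH hk hadj]; first exact: reach_refl.
have [_ hj'] := reach_mem hij.
exact: reach_trans (reach_step (reach_refl _ hk) hj' (adj_sym hadj)) IH.
Qed.

Lemma connected_from S i0 : (forall j, S j -> reach K S i0 j) -> connected K S.
Proof. by move=> h i j /h /reach_sym hi /h; apply: reach_trans. Qed.

Lemma adj_succ i j : j = i.+1 :> nat -> (j.+1 < m)%N -> adj K i j.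
Proof.
move=> ej hj; have hi : (i.+1 < m)%N by rewrite -ej; apply: ltnW.
split; first by rewrite -val_eqE /= ej ltn_eqF.
rewrite !(alphaE _ hm2) /lead /is_fork hi hj /= ej !(formBl, formBr, formZl, formZr) !form_eps_eps.
rewrite eqxx hi !ltn_eqF //= !mulr0n mulr1n !expr0 !mul1r.
by rewrite !subr0 sub0r oppr_eq0 oner_eq0.
Qed.

Lemma adj_fork i j : i = (m - 3)%N :> nat -> j = (m - 1)%N :> nat -> adj K i j.
Proof.
move=> ei ej; have hi : (i.+1 < m)%N by lia.
have hj : (j.+1 < m)%N = false by lia.
split; first by rewrite -val_eqE /= ei ej; apply/eqP; lia.
rewrite !(alphaE _ hm2) /lead /is_fork hi hj /= ei (_ : (m - 3).+1 = m - 2)%N; last by lia.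
rewrite !(formBl, formBr, formZl, formZr) !form_eps_eps.
have -> : (m - 3 == m - 2)%N = false by apply/eqP; lia.
have -> : (m - 3 == (m - 2).+1)%N = false by apply/eqP; lia.
rewrite eqxx ltn_eqF // (_ : m - 2 < m)%N /=; last by lia.
by rewrite !mulr0 expr0 mul1r !subr0 sub0r oppr_eq0 oner_eq0.
Qed.

Lemma connected_chain S (q : 'I_m) : (q.+1 < m)%N ->
  (forall i : 'I_m, (i <= q)%N -> S i) -> (forall j, S j -> (q < j)%N -> adj K q j) ->
  connected K S.
Proof.
move=> hq hS hadj; have h0 : (0 < m)%N by lia.
pose i0 := Ordinal h0.
have chain n j : j = n :> nat -> (n <= q)%N -> reach K S i0 j.
  elim: n j => [|n IH] j ej hn.
    have -> : j = i0 by apply: val_inj; rewrite /= ej.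
    exact/reach_refl/hS.
  have hn' : (n < m)%N by lia.
  apply: reach_step (IH (Ordinal hn') erefl (ltnW hn)) (hS j _) (adj_succ _ _); rewrite ej //; lia.
apply: (@connected_from _ i0) => j hj; case: (leqP j q) => hjq; first exact: chain erefl hjq.
exact: reach_step (chain q q erefl (leqnn _)) hj (hadj j hj hjq).
Qed.

End DynkinDiagram.

Section NonintegralSimpleRoots.
Variables (K : fieldType) (m : nat).
Hypothesis hm : (3 <= m)%N.
Let hm2 : (2 <= m)%N := ltnW hm.
Implicit Types (lam : 'rV[K]_m).

Definition nonint_connected lam :=
  (forall i, ~ nonint_simple lam i) \/
  ((forall i : 'I_m, (i : nat) = 0%N -> nonint_simple lam i) /\ connected K (nonint_simple lam)).

Definition nonint_prefix lam k :=
  forall p, (p < k)%N -> ~ isInt (coord lam p - coord lam p.+1).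

Lemma nonint_simple_succ lam (i : 'I_m) : (i.+1 < m)%N ->
  nonint_simple lam i <-> ~ isInt (coord lam i - coord lam i.+1).
Proof.
by move=> hi; rewrite /nonint_simple (form_shift_alpha_coord hm2) /lead /is_fork hi expr0 mul1r.
Qed.

Lemma nonint_simple_fork lam (i : 'I_m) : (m <= i.+1)%N ->
  nonint_simple lam i <-> ~ isInt (coord lam (m - 2) + coord lam (m - 1)).
Proof.
move=> hi; rewrite /nonint_simple (form_shift_alpha_coord hm2) /lead /is_fork leqNgt in hi *.
by rewrite (negbTE hi) expr1 mulN1r opprK (_ : (m - 2).+1 = m - 1)%N //; lia.
Qed.

Lemma nonint_connected_full_prefix lam : nonint_prefix lam (m - 2) -> nonint_connected lam.
Proof.
move=> hpre; right.
have hS (i : 'I_m) : (i <= m - 3)%N -> nonint_simple lam i.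
  by move=> hi; apply/nonint_simple_succ; [lia | apply: hpre; lia].
split; first by move=> i i0; apply: hS; lia.
have hq : (m - 3 < m)%N by lia.
apply: (connected_chain hm (q := Ordinal hq)) => //=; first lia.
move=> j _ hj; have := ltn_ord j; case: (eqVneq (j : nat) (m - 2)%N) => [ej|nj] hjm.
  by apply: adj_succ => //=; lia.
by apply: adj_fork => //=; lia.
Qed.

Lemma nonint_connected_prefix k lam : (k < m)%N -> nonint_prefix lam k ->
  (forall i : 'I_m, (k <= i)%N -> ~ nonint_simple lam i) -> nonint_connected lam.
Proof.
case: k => [|k] hk hpre htail; first by left => i; apply: htail.
right; have hS (i : 'I_m) : (i <= k)%N -> nonint_simple lam i.
  by move=> hi; apply/nonint_simple_succ; [lia | apply: hpre].
split; first by move=> i i0; apply: hS; lia.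
have hq : (k < m)%N by lia.
by apply: (connected_chain hm (q := Ordinal hq)) => //= j hj /htail.
Qed.

End NonintegralSimpleRoots.

Section FreeMoves.
Variables (K : fieldType) (m : nat).
Hypothesis hm2 : (2 <= m)%N.
Implicit Types (lam : 'rV[K]_m).

Lemma reachable_sdot_nonint lam b :
  ~ isInt (form (lam + rho K m) (alpha K b)) -> reachable lam (sdot (alpha K b) lam).
Proof.
move=> h; apply: reachable_sdot => -[k hk]; apply: h.
by rewrite (form_shift_alpha hm2) hk natr1; apply: isInt_nat.
Qed.

Lemma reachable_swap lam p : (p.+1 < m)%N -> ~ isInt (coord lam p - coord lam p.+1) ->
  exists2 lam', reachable lam lam' & forall k, coord lam' k = coord lam (swapn p k).
Proof.
move=> hp h; pose b := Ordinal (ltnW hp).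
have lb : lead b = p by rewrite /lead /= hp.
have fb : is_fork b = false by rewrite /is_fork /= hp.
exists (sdot (alpha K b) lam).
  by apply: reachable_sdot_nonint; rewrite (form_shift_alpha_coord hm2) lb fb expr0 mul1r.
by move=> k; rewrite (coord_sdot_alpha hm2) /signed_swap lb fb mul1r.
Qed.

Lemma reachable_flip lam : ~ isInt (coord lam (m - 2) + coord lam (m - 1)) ->
  exists2 lam', reachable lam lam' &
    forall k, coord lam' k = signed_swap (m - 2) true (coord lam) k.
Proof.
move=> h; have hb : (m - 1 < m)%N by lia.
pose b := Ordinal hb.
have lb : lead b = (m - 2)%N by rewrite /lead /= ifN //; lia.
have fb : is_fork b by rewrite /is_fork /=; lia.
exists (sdot (alpha K b) lam); last by move=> k; rewrite (coord_sdot_alpha hm2) lb fb.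
apply: reachable_sdot_nonint; rewrite (form_shift_alpha_coord hm2) lb fb expr1 mulN1r opprK.
by rewrite (_ : (m - 2).+1 = m - 1)%N //; lia.
Qed.

Lemma reachable_bubble a j lam : (a <= j < m)%N ->
  (forall t, (a <= t < j)%N -> ~ isInt (coord lam t - coord lam j)) ->
  exists2 lam', reachable lam lam' &
    coord lam' a = coord lam j /\ forall t, (t < a)%N -> coord lam' t = coord lam t.
Proof.
elim: j lam => [|j IH] lam /andP [haj hj] hfree.
  have -> : a = 0%N by lia.
  by exists lam; [exact: reachable_refl | split].
have [->|naj] := eqVneq a j.+1; first by exists lam; [exact: reachable_refl | split].
have haj' : (a <= j < j.+1)%N by lia.
have [lam1 r1 e1] := reachable_swap hj (hfree j haj').
have swap_lt t : (t < j)%N -> swapn j t = t by move=> ht; rewrite /swapn !ifN_eq //; lia.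
have [|t ht|lam' r' [ea elow]] := IH lam1; first lia.
  by rewrite !e1 swap_lt /swapn ?eqxx //; [apply: hfree | ]; lia.
exists lam'; first exact: reachable_trans r1 r'.
split => [|t ht]; first by rewrite ea e1 /swapn eqxx.
by rewrite elow // e1 swap_lt //; lia.
Qed.

End FreeMoves.

Section ConnectNonintegral.
Variables (K : fieldType) (m : nat).
Hypothesis hm : (3 <= m)%N.
Let hm2 : (2 <= m)%N := ltnW hm.
Implicit Types (lam : 'rV[K]_m).

Lemma nonint_prefix_succ lam lam' k : nonint_prefix lam k ->
  (forall t, (t <= k)%N -> coord lam' t = coord lam t) ->
  ~ isInt (coord lam k - coord lam' k.+1) -> nonint_prefix lam' k.+1.
Proof.
move=> hpre heq hk p; rewrite ltnS leq_eqVlt => /orP [/eqP ->|hp]; first by rewrite heq.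
by rewrite !heq //; [apply: hpre | apply: ltnW].
Qed.

Lemma nonint_prefix_extend_bubble k lam : nonint_prefix lam k ->
  (exists j, (k < j < m)%N /\ ~ isInt (coord lam j - coord lam k)) ->
  exists2 lam', reachable lam lam' & nonint_prefix lam' k.+1.
Proof.
set x := coord lam => hpre [j hj].
pose P j := (k < j < m)%N && `[< ~ isInt (x j - x k) >].
have hP : exists j, P j by exists j; rewrite /P hj.1; apply/asboolP; exact: hj.2.
have [j0 /andP [hj0 /asboolP hn0] hmin] := ex_minnP hP.
have hfree t : (k.+1 <= t < j0)%N -> ~ isInt (x t - x j0).
  move=> ht; have ht' : isInt (x t - x k).
    apply: contrapT => hnt; have := hmin t; rewrite /P asboolT //=; lia.
  rewrite (_ : x t - x j0 = (x t - x k) + - (x j0 - x k)); last by ring.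
  by apply: nonint_addl => // /isIntN; rewrite opprK.
have [|lam' r [e1 elow]] := reachable_bubble hm2 (a := k.+1) (lam := lam) _ hfree; first lia.
exists lam' => //; apply: nonint_prefix_succ hpre elow _.
by rewrite e1 -/x -opprB => /isIntN; rewrite opprK.
Qed.

Lemma nonint_prefix_extend_flip k lam : (k <= m - 3)%N -> nonint_prefix lam k ->
  (forall t, (k <= t < m)%N -> isInt (coord lam t - coord lam k)) ->
  nonint_connected lam \/ exists2 lam', reachable lam lam' & nonint_prefix lam' k.+1.
Proof.
set x := coord lam => hk hpre hint.
have [hfork|hfork] := EM (isInt (x (m - 2)%N + x (m - 1)%N)).
  left; apply: (nonint_connected_prefix hm (k := k)) => //; first lia.
  move=> i hki; case: (ltnP i.+1 m) => hi; last by rewrite nonint_simple_fork.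
  rewrite nonint_simple_succ //; apply.
  rewrite (_ : x i - x i.+1 = (x i - x k) - (x i.+1 - x k)); last by ring.
  by apply: isIntB; apply: hint; lia.
right; have [lam1 r1 e1] := reachable_flip hm2 hfork.
have e1low t : (t < m - 2)%N -> coord lam1 t = x t.
  move=> ht; have n1 : (t == m - 2)%N = false by apply/eqP; lia.
  have n2 : (t == (m - 2).+1)%N = false by apply/eqP; lia.
  by rewrite e1 /signed_swap /in_pair /swapn n1 n2 mul1r.
have e1top : coord lam1 (m - 2) = - x (m - 1)%N.
  by rewrite e1 /signed_swap /in_pair /swapn eqxx mulN1r (_ : (m - 2).+1 = m - 1)%N //; lia.
have nonint_plus t : (k <= t < m)%N -> ~ isInt (x t + x (m - 1)%N).
  move=> ht; have hkm : (k <= m - 2 < m)%N by lia.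
  rewrite (_ : x t + _ = (x t - x k) - (x (m - 2)%N - x k) + (x (m - 2)%N + x (m - 1)%N));
    last by ring.
  by apply: nonint_addl hfork; apply: isIntB; apply: hint.
have [|t ht|lam' r' [ea elow]] := reachable_bubble hm2 (a := k.+1) (j := m - 2) (lam := lam1).
- lia.
- by rewrite e1low ?e1top ?opprK; [apply: nonint_plus|]; lia.
exists lam'; first exact: reachable_trans r1 r'.
apply: nonint_prefix_succ hpre _ _ => [t ht|]; first by rewrite elow ?e1low //; lia.
by rewrite ea e1top opprK; apply: nonint_plus; lia.
Qed.

Lemma nonint_prefix_extend k lam : (k <= m - 3)%N -> nonint_prefix lam k ->
  nonint_connected lam \/ exists2 lam', reachable lam lam' & nonint_prefix lam' k.+1.
Proof.
move=> hk hpre.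
have [hj|hcong] := EM (exists j, (k < j < m)%N /\ ~ isInt (coord lam j - coord lam k)).
  by right; apply: nonint_prefix_extend_bubble.
apply: nonint_prefix_extend_flip => // t /andP [hkt htm].
have [->|ntk] := eqVneq t k; first by rewrite subrr; exists 0.
apply: contrapT => hn; apply: hcong; exists t; split => //.
by rewrite htm andbT ltn_neqAle eq_sym ntk.
Qed.

Lemma reachable_nonint_connected lam : exists2 lam', reachable lam lam' & nonint_connected lam'.
Proof.
suff ind d k lam' : (k + d = m - 2)%N -> nonint_prefix lam' k ->
    exists2 lam'', reachable lam' lam'' & nonint_connected lam''.
  exact: (ind (m - 2)%N 0%N).
elim: d k lam' => [|d IH] k lam' hkd hpre.
  exists lam'; first exact: reachable_refl.
  by apply: (nonint_connected_full_prefix hm); rewrite -hkd addn0.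
have [|hgood|[lam1 r1 hpre1]] := nonint_prefix_extend (k := k) _ hpre; first lia.
  by exists lam'; [exact: reachable_refl|].
have [|lam2 r2 hgood] := IH k.+1 lam1 _ hpre1; first lia.
by exists lam2 => //; apply: reachable_trans r1 r2.
Qed.

End ConnectNonintegral.

Section NegativeCount.
Variables (K : fieldType) (m : nat).
Hypothesis hchar : [pchar K] =i pred0.

Definition negint (v : K) : Prop := exists k : nat, v = - (k.+1)%:R.

Lemma nat_not_negint (j : nat) : ~ negint j%:R.
Proof.
move=> [k /eqP]; rewrite -subr_eq0 opprK -natrD (proj1 (pcharf0P K) hchar).
by rewrite addnS.
Qed.

Lemma negintN v : negint v -> ~ negint (- v).
Proof. by move=> [k ->]; rewrite opprK; apply: nat_not_negint. Qed.

(* The triple (a, b, s) with a < b stands for the positive root eps_a - (-1)^s eps_b. *)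
Definition negcount (x : nat -> K) : nat :=
  #|[set t : 'I_m * 'I_m * bool |
      (t.1.1 < t.1.2)%N && `[< negint (x t.1.1 - (-1) ^+ t.2 * x t.1.2) >]]|.

Section SignedSwapDecrease.
Variables (p : nat) (e : bool) (x x' : nat -> K).
Hypotheses (hp : (p.+1 < m)%N) (he : e -> p.+2 = m).
Hypothesis hneg : negint (x p - (-1) ^+ e * x p.+1).
Hypothesis hx' : forall k, x' k = signed_swap p e x k.

Lemma signed_swap_value_pair (s : bool) :
  x' p - (-1) ^+ s * x' p.+1 = - (-1) ^+ (s (+) e) * (x p - (-1) ^+ s * x p.+1).
Proof.
rewrite !hx' /signed_swap /in_pair /swapn eqxx (gtn_eqF (ltnSn p)) eqxx orbT /= !andbT signr_addb.
by case: s; case: e; rewrite /= ?expr1 ?expr0; ring.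
Qed.

Lemma signed_swap_value a b (s : bool) : (a < b < m)%N -> ~ (a = p /\ b = p.+1) ->
  x' a - (-1) ^+ s * x' b = x (swapn p a) - (-1) ^+ (s (+) (e && in_pair p b)) * x (swapn p b).
Proof.
move=> /andP [hab hbm] hpair; rewrite !hx' /signed_swap signr_addb.
have -> : e && in_pair p a = false.
  case: e he => // /(_ erefl) hpm; apply/negbTE; rewrite negb_or.
  by apply/andP; split; apply/eqP; lia.
by rewrite mul1r mulrA.
Qed.

Let oswap (a : 'I_m) : 'I_m := Ordinal (swapn_lt hp (ltn_ord a)).

(* The reflection in the simple root eps_p - (-1)^e eps_(p+1) maps the other
   positive roots to positive roots; on triples it acts as follows. *)
Let relabel (t : 'I_m * 'I_m * bool) : 'I_m * 'I_m * bool :=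
  let: (a, b, s) := t in
  if ((a : nat) == p) && ((b : nat) == p.+1) then t
  else (oswap a, oswap b, s (+) (e && in_pair p b)).

Lemma negcount_signed_swap : (negcount x' < negcount x)%N.
Proof.
rewrite /negcount.
set New := [set t | _ && `[< negint (x' _ - _) >]].
set Old := [set t | _ && `[< negint (x _ - _) >]].
pose p0 : 'I_m * 'I_m * bool := (Ordinal (ltnW hp), Ordinal hp, e).
have p0_old : p0 \in Old by rewrite inE /= ltnSn; apply/asboolP.
have relabel_old : {in New, forall t, relabel t \in Old :\ p0}.
  move=> [[a b] s]; rewrite !inE /= => /andP [hab /asboolP hn].
  case: ifP => [/andP [/eqP ea /eqP eb]|hpair].
    move: hn; rewrite ea eb signed_swap_value_pair.
    case: (eqVneq s e) => [->|nse]; first by rewrite addbb expr0 mulN1r => /(negintN hneg).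
    rewrite (_ : s (+) e = true) ?expr1 ?opprK ?mul1r; last by case: s e nse => [] [].
    move=> hn; rewrite ltnSn /=; apply/andP; split; last by apply/asboolP.
    by apply/negP => /eqP [_ _ es]; rewrite es eqxx in nse.
  have {}hpair : ~ ((a : nat) = p /\ (b : nat) = p.+1).
    by move=> [ea eb]; rewrite ea eb !eqxx in hpair.
  move: hn; rewrite signed_swap_value ?hab ?ltn_ord // => hn.
  rewrite /= swapn_mono //; apply/andP; split; last by apply/asboolP.
  apply/negP => /eqP [/(congr1 (swapn p)) ea /(congr1 (swapn p)) eb _].
  move: ea eb; rewrite !swapnK /swapn eqxx (gtn_eqF (ltnSn p)) eqxx; lia.
have swapn_pair a b : swapn p a = p -> swapn p b = p.+1 -> (b < a)%N.
  move=> /(congr1 (swapn p)) ea /(congr1 (swapn p)) eb.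
  by move: ea eb; rewrite !swapnK /swapn eqxx (gtn_eqF (ltnSn p)) eqxx; lia.
have relabel_inj : {in New &, injective relabel}.
  move=> [[a1 b1] s1] [[a2 b2] s2]; rewrite !inE /= => /andP [h1 _] /andP [h2 _].
  case: ifP => [/andP [/eqP ea1 /eqP eb1]|_]; case: ifP => [/andP [/eqP ea2 /eqP eb2]|_] //.
  - move=> [/(congr1 val) /= ea /(congr1 val) /= eb _].
    by have := swapn_pair a2 b2; rewrite -ea -eb ea1 eb1; lia.
  - move=> [/(congr1 val) /= ea /(congr1 val) /= eb _].
    by have := swapn_pair a1 b1; rewrite ea eb ea2 eb2; lia.
  move=> [/(can_inj (swapnK p)) /val_inj ea /(can_inj (swapnK p)) /val_inj eb].
  by subst a2 b2; move/addIb ->.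
rewrite (cardsD1 p0 Old) p0_old add1n ltnS -(card_in_imset relabel_inj).
by apply/subset_leq_card/subsetP => _ /imsetP [t ht ->]; apply: relabel_old.
Qed.

End SignedSwapDecrease.

End NegativeCount.

Section NegativeIntegralSimpleRoots.
Variables (K : fieldType) (m : nat).
Hypotheses (hchar : [pchar K] =i pred0) (hm2 : (2 <= m)%N).
Implicit Types (lam : 'rV[K]_m).

Lemma nonint_simple_sdot_int lam b : isInt (form (lam + rho K m) (alpha K b)) ->
  nonint_simple (sdot (alpha K b) lam) = nonint_simple lam.
Proof.
move=> hb; apply/funext => i; apply/propext; rewrite /nonint_simple (form_shift_sdot (alpha K b)).
have hprod := isIntM hb (isInt_form_alpha K hm2 b i).
split=> hn h; apply: hn; first exact: isIntB.
by move: (isIntD h hprod); rewrite subrK.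
Qed.

Lemma negint_step lam b k : form (lam + rho K m) (alpha K b) = - (k.+1)%:R ->
  [/\ reachable lam (sdot (alpha K b) lam),
      nonint_simple (sdot (alpha K b) lam) = nonint_simple lam
    & (negcount m (coord (sdot (alpha K b) lam)) < negcount m (coord lam))%N].
Proof.
move=> hk; split.
- apply: reachable_sdot => -[j hj]; apply: (nat_not_negint hchar (j := j.+1)); exists k.
  by rewrite -natr1 -hj -(form_shift_alpha hm2) hk.
- by apply: nonint_simple_sdot_int; rewrite hk; apply/isIntN/isInt_nat.
apply: (negcount_signed_swap hchar (p := lead b) (e := is_fork b)).
- exact: lead_lt.
- exact: is_fork_lead.
- by exists k; rewrite -hk (form_shift_alpha_coord hm2).
- by move=> k'; rewrite (coord_sdot_alpha hm2).
Qed.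

Lemma reachable_no_negint lam : nonint_connected lam ->
  exists2 lam', reachable lam lam' &
    nonint_connected lam' /\ forall i, ~ negint (form (lam' + rho K m) (alpha K i)).
Proof.
have [n] := ubnP (negcount m (coord lam)); elim: n lam => // n IH lam hlt hgood.
have [[i [k hk]]|hno] := EM (exists i, negint (form (lam + rho K m) (alpha K i))).
  have [r1 e1 hdec] := negint_step hk.
  have [||lam' r' hfin] := IH (sdot (alpha K i) lam); first by apply: leq_trans hdec _.
    by rewrite /nonint_connected e1.
  by exists lam' => //; apply: reachable_trans r1 r'.
by exists lam; [exact: reachable_refl | split => // i hi; apply: hno; exists i].
Qed.

End NegativeIntegralSimpleRoots.

Section RegularIntegrality.
Variables (K : fieldType) (m : nat).
Hypothesis hm2 : (2 <= m)%N.
Implicit Types (lam : 'rV[K]_m) (x : nat -> K).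

Definition nzint (v : K) := exists z : int, z != 0 /\ v = z%:~R.

Definition coord_regular x := forall i j (s : bool), (i < m)%N -> (j < m)%N -> i != j ->
  nzint (x i - (-1) ^+ s * x j).

Lemma nzint_sign (b : bool) v : nzint v -> nzint ((-1) ^+ b * v).
Proof.
move=> [z [nz ->]]; exists ((-1) ^+ b * z); split; last by rewrite intrM rmorph_sign.
by rewrite mulf_neq0 ?signr_eq0.
Qed.

Lemma regular_integral_coord lam : coord_regular (coord lam) -> regular_integral lam.
Proof.
move=> h a [i [j [s [t [nij ->]]]]].
have := nzint_sign s (h i j (~~ (s (+) t)) (ltn_ord i) (ltn_ord j) nij).
rewrite formDr !formZr -/(coord lam i) -/(coord lam j).
by case: s; case: t; rewrite /= ?expr1 ?expr0; congr nzint; ring.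
Qed.

Lemma coord_regular_signed_swap p e x : (p.+1 < m)%N ->
  coord_regular x -> coord_regular (signed_swap p e x).
Proof.
move=> hp h i j s hi hj nij; rewrite /signed_swap.
set a := e && _; set b := e && _.
have := h (swapn p i) (swapn p j) (s (+) (a (+) b)) (swapn_lt hp hi) (swapn_lt hp hj).
rewrite (inj_eq (can_inj (swapnK p))) => /(_ nij) /(nzint_sign a).
by rewrite !signr_addb; case: a; case: b; case: s; rewrite /= ?expr1 ?expr0; congr nzint; ring.
Qed.

Lemma coord_regular_sdot lam b :
  coord_regular (coord (sdot (alpha K b) lam)) -> coord_regular (coord lam).
Proof.
rewrite (funext (coord_sdot_alpha hm2 b lam)).
move=> /(coord_regular_signed_swap (is_fork b) (lead_lt hm2 b)).
by rewrite (funext (signed_swapK _ _ _)).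
Qed.

Lemma coord_regular_sdots bs lam :
  coord_regular (coord (sdots bs lam)) -> coord_regular (coord lam).
Proof. by elim: bs lam => //= b bs IH lam /IH; apply: coord_regular_sdot. Qed.

Definition posnat (v : K) := exists k : nat, v = k.+1%:R.

Lemma posnatD v w : posnat v -> posnat w -> posnat (v + w).
Proof. by move=> [k ->] [l ->]; exists (k + l.+1)%N; rewrite -natrD addSn. Qed.

Lemma nzint_posnat v : posnat v -> nzint v.
Proof. by move=> [k ->]; exists k.+1%:Z. Qed.

Section Dominant.
Variable lam : 'rV[K]_m.
Hypothesis hdom : dominant_integral lam.
Local Notation x := (coord lam).

Lemma posnat_simple b : posnat (form (lam + rho K m) (alpha K b)).
Proof. by have [k hk] := hdom b; exists k; rewrite (form_shift_alpha hm2) hk natr1. Qed.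

Lemma posnat_coord_sub i j : (i < j < m)%N -> posnat (x i - x j).
Proof.
elim: j => [|j IH] /andP [hij hj]; first by [].
have hsucc : posnat (x j - x j.+1).
  have := posnat_simple (Ordinal (ltnW hj)).
  by rewrite (form_shift_alpha_coord hm2) /lead /is_fork /= hj expr0 mul1r.
have [->|nij] := eqVneq i j; first exact: hsucc.
rewrite (_ : x i - x j.+1 = (x i - x j) + (x j - x j.+1)); last by ring.
by apply: posnatD hsucc; apply: IH; lia.
Qed.

Lemma posnat_coord_add_last j : (j < m - 1)%N -> posnat (x j + x (m - 1)%N).
Proof.
move=> hj; have hlast : (m - 1 < m)%N by lia.
have hfork : posnat (x (m - 2)%N + x (m - 1)%N).
  have := posnat_simple (Ordinal hlast); rewrite (form_shift_alpha_coord hm2) /lead /is_fork /=.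
  have -> : ((m - 1).+1 < m)%N = false by lia.
  by rewrite /= expr1 mulN1r opprK (_ : (m - 2).+1 = m - 1)%N //; lia.
have [->|nj] := eqVneq j (m - 2)%N; first exact: hfork.
rewrite (_ : x j + _ = (x j - x (m - 2)%N) + (x (m - 2)%N + x (m - 1)%N)); last by ring.
by apply: posnatD hfork; apply: posnat_coord_sub; lia.
Qed.

Lemma posnat_coord_add i j : (i < j < m)%N -> posnat (x i + x j).
Proof.
move=> hij; have [->|nj] := eqVneq j (m - 1)%N; first by apply: posnat_coord_add_last; lia.
rewrite (_ : x i + x j = (x i - x (m - 1)%N) + (x j + x (m - 1)%N)); last by ring.
by apply: posnatD; [apply: posnat_coord_sub | apply: posnat_coord_add_last]; lia.
Qed.

Lemma coord_regular_dominant : coord_regular x.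
Proof.
move=> i j s hi hj nij; have [hij|hji|eij] := ltngtP i j; last by rewrite eij eqxx in nij.
  apply: nzint_posnat; case: s; rewrite ?expr1 ?mulN1r ?opprK ?expr0 ?mul1r.
    by apply: posnat_coord_add; lia.
  by apply: posnat_coord_sub; lia.
case: s; rewrite ?expr1 ?mulN1r ?opprK ?expr0 ?mul1r.
  by apply/nzint_posnat; rewrite addrC; apply: posnat_coord_add; lia.
by rewrite -opprB -mulN1r; apply: (nzint_sign true); apply/nzint_posnat/posnat_coord_sub; lia.
Qed.

End Dominant.

End RegularIntegrality.

Section Lattice.
Variables (K : fieldType) (m : nat) (R : {pred K}) (p n : nat).
Hypotheses (hR : subring_closed R) (hm2 : (2 <= m)%N).
HB.instance Definition _ := GRing.isSubringClosed.Build K R hR.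
Implicit Types (lam : 'rV[K]_m).

Lemma lattice_cond_sdot lam b :
  lattice_cond R p n lam -> lattice_cond R p n (sdot (alpha K b) lam).
Proof.
move=> hl r hr; set c := ev lam (alpha K b) + 1.
set S := \sum_i r i * form (alpha K b) (alpha K i).
have SR : S \in R.
  apply: (@rpred_sum _ R) => i _; case: (isInt_form_alpha K hm2 b i) => z ->.
  by rewrite rpredM ?rpred_int.
have -> : \sum_i r i * ev (sdot (alpha K b) lam) (alpha K i) =
    \sum_i r i * ev lam (alpha K i) - c * S.
  rewrite mulr_sumr -sumrB; apply: eq_bigr => i _.
  by rewrite /ev /sdot formBl formZl -/(ev _ _) (form_shift_alpha hm2) /c; ring.
have hb : (p ^ n)%:R * (S * ev lam (alpha K b)) \in R.
  have := hl (fun i => (i == b)%:R * S) (fun i => rpredM (rpred_nat _ _) SR).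
  rewrite (bigD1 b) //= big1 => [|i /negbTE ->]; last by rewrite !mul0r.
  by rewrite eqxx mul1r addr0.
have -> : (p ^ n)%:R * (\sum_i r i * ev lam (alpha K i) - c * S) =
    (p ^ n)%:R * (\sum_i r i * ev lam (alpha K i)) -
    ((p ^ n)%:R * (S * ev lam (alpha K b)) + (p ^ n)%:R * S).
  by rewrite /c; ring.
by apply: rpredB (hl r hr) (rpredD hb (rpredM (rpred_nat _ _) SR)).
Qed.

Lemma lattice_cond_sdots bs lam : lattice_cond R p n lam -> lattice_cond R p n (sdots bs lam).
Proof. by elim: bs lam => //= b bs IH lam /(lattice_cond_sdot b); apply: IH. Qed.

End Lattice.

Theorem proposition3p54 (K : fieldType) (R : {pred K}) (p n m : nat) :
  [pchar K] =i pred0 -> prime p -> odd p -> subring_closed R ->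
  (3 <= m)%N ->
  forall lam : 'rV[K]_m,
    lattice_cond R p n lam -> ~ regular_integral lam ->
    exists bs : seq 'I_m,
      (forall (s1 s2 : seq 'I_m) (b : 'I_m), bs = s1 ++ b :: s2 ->
         ~ isNat (ev (sdots s1 lam) (alpha K b))) /\
      in_S R p n (sdots bs lam).
Proof.
move=> hchar _ _ hR hm lam hlat hnreg; have hm2 := ltnW hm.
have [lam1 r1 hgood1] := reachable_nonint_connected hm lam.
have [lam2 r2 [hgood2 hneg2]] := reachable_no_negint hchar hm2 hgood1.
have [bs hadm ebs] := reachable_trans r1 r2; subst lam2.
exists bs; split; first exact: admissibleP.
split=> //; first exact: lattice_cond_sdots.
move=> /(coord_regular_dominant hm2) /(coord_regular_sdots hm2).
by move/regular_integral_coord.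
Qed.
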